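(* Let $(X,d_X)$ be an extended pseudometric space, $\Delta\subset X$, and $S,T$ multisets of elements of $X$. Then $d^{\Delta,d_X}_\infty(S,T)=\max\{\delta^{\Delta,d_X}_\infty(S,T),\ \delta^{\Delta,d_X}_\infty(T,S)\}.$
   Context: An extended pseudometric is a symmetric function $d_X\colon X\times X\to[0,\infty]$ satisfying the triangle inequality and $d_X(x,x)=0$. A multiset of elements of $X$ is a set together with a map to $X$. For $\epsilon\ge0$, an $\epsilon$-matching between $S$ and $T$ relative to $\Delta$ consists of submultisets $S'\subset S$, $T'\subset T$ such that every $x\in(S\setminus S')\cup(T\setminus T')$ has some $y\in\Delta$ with $d_X(x,y)\le\epsilon$, together with a bijection $f\colon S'\to T'$ with $d_X(x,f(x))\le\epsilon$ for all $x\in S'$. An $\epsilon$-embedding of $S$ into $T$ relative to $\Delta$ consists of a submultiset $S'\subset S$ such that every $x\in S\setminus S'$ has some $y\in\Delta$ with $d_X(x,y)\le\epsilon$, together with an injection $f\colon S'\to T$ with $d_X(x,f(x))\le\epsilon$ for all $x\in S'$. The bottleneck distance is $d^{\Delta,d_X}_\infty(S,T)=\inf\{\epsilon\ge0:\text{an }\epsilon\text{-matching between }S,T\text{ relative to }\Delta\text{ exists}\}$ and the hemidistance is $\delta^{\Delta,d_X}_\infty(S,T)=\inf\{\epsilon\ge0:\text{an }\epsilon\text{-embedding of }S\text{ into }T\text{ relative to }\Delta\text{ exists}\}$ (infimum of the empty set $=\infty$). *)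

From HB Require Import structures.
From mathcomp Require Import all_boot all_order all_algebra.
From mathcomp Require Import all_classical all_reals ereal.
Set Implicit Arguments. Unset Strict Implicit. Unset Printing Implicit Defensive.
Import Order.TTheory GRing.Theory Num.Theory.
Local Open Scope classical_set_scope.
Local Open Scope ereal_scope.

Definition ext_pseudometric (R : realType) (X : Type) (d : X -> X -> \bar R) : Prop :=
  (forall x y, 0 <= d x y) /\ (forall x, d x x = 0) /\
  (forall x y, d x y = d y x) /\ (forall x y z, d x z <= d x y + d y z).

(* A multiset of elements of X is an index type I together with s : I -> X.
   A submultiset is a subset S' : set I of the index type. *)

Definition near_diag (R : realType) (X : Type) (d : X -> X -> \bar R)
  (Delta : set X) (eps : \bar R) (x : X) : Prop :=
  exists y, Delta y /\ d x y <= eps.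

Definition eps_matching (R : realType) (X : Type) (d : X -> X -> \bar R)
  (Delta : set X) (I J : Type) (s : I -> X) (t : J -> X) (eps : \bar R) : Prop :=
  exists (S' : set I) (T' : set J),
    (forall i, ~ S' i -> near_diag d Delta eps (s i)) /\
    (forall j, ~ T' j -> near_diag d Delta eps (t j)) /\
    exists f : {i : I | S' i} -> {j : J | T' j},
      bijective f /\ forall i, d (s (proj1_sig i)) (t (proj1_sig (f i))) <= eps.

Definition eps_embedding (R : realType) (X : Type) (d : X -> X -> \bar R)
  (Delta : set X) (I J : Type) (s : I -> X) (t : J -> X) (eps : \bar R) : Prop :=
  exists (S' : set I),
    (forall i, ~ S' i -> near_diag d Delta eps (s i)) /\
    exists f : {i : I | S' i} -> J,
      injective f /\ forall i, d (s (proj1_sig i)) (t (f i)) <= eps.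

(* Bottleneck distance and hemidistance (inf of empty set is +oo). *)
Definition bottleneck (R : realType) (X : Type) (d : X -> X -> \bar R)
  (Delta : set X) (I J : Type) (s : I -> X) (t : J -> X) : \bar R :=
  ereal_inf [set e | 0 <= e /\ eps_matching d Delta s t e].

Definition hemidist (R : realType) (X : Type) (d : X -> X -> \bar R)
  (Delta : set X) (I J : Type) (s : I -> X) (t : J -> X) : \bar R :=
  ereal_inf [set e | 0 <= e /\ eps_embedding d Delta s t e].

(* A matching is obtained from embeddings f : S' -> T and g : T' -> S in both
   directions by the Schroeder-Bernstein construction for partial injections:
   follow a point i of S backwards along g and f; if this chain starts at a
   point of S outside the image of g, match i with f i, otherwise (the chain
   starts in T or is infinite) match i with g^-1 i.  The points left unmatched
   lie outside S' or outside T', so the embeddings already put them eps-close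
   to Delta; of the pseudometric axioms only symmetry is needed. *)

From HB Require Import structures.
From mathcomp Require Import all_boot all_order all_algebra.
From mathcomp Require Import all_classical all_reals ereal.
Import Order.TTheory GRing.Theory Num.Theory.
Local Open Scope classical_set_scope.
Local Open Scope ereal_scope.

Lemma sval_inj (A : Type) (P : A -> Prop) : injective (@proj1_sig A P).
Proof. by move=> [a pa] [b pb] /= ab; exact: eq_exist. Qed.

Lemma bijective_of_graph {I J : Type} {rel : I -> J -> Prop} :
  (forall i j1 j2, rel i j1 -> rel i j2 -> j1 = j2) ->
  (forall i1 i2 j, rel i1 j -> rel i2 j -> i1 = i2) ->
  exists h : {i | exists j, rel i j} -> {j | exists i, rel i j},
    bijective h /\ forall x, rel (proj1_sig x) (proj1_sig (h x)).
Proof.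
move=> rel_fun rel_inj.
pose hj (x : {i | exists j, rel i j}) := proj1_sig (cid (proj2_sig x)).
pose ki (y : {j | exists i, rel i j}) := proj1_sig (cid (proj2_sig y)).
have rel_hj x : rel (proj1_sig x) (hj x) by rewrite /hj; case: cid.
have rel_ki y : rel (ki y) (proj1_sig y) by rewrite /ki; case: cid.
pose h x := exist (fun j => exists i, rel i j) (hj x) (ex_intro _ _ (rel_hj x)).
pose k y := exist (fun i => exists j, rel i j) (ki y) (ex_intro _ _ (rel_ki y)).
exists h; split => //; exists k => [x|y]; apply: sval_inj.
- exact: rel_inj (rel_ki (h x)) (rel_hj x).
- exact: rel_fun (rel_hj (k y)) (rel_ki y).
Qed.

Section PartialSchroederBernstein.

Context {I J : Type} {S' : set I} {T' : set J}.
Context {f : {i | S' i} -> J} {g : {j | T' j} -> I}.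
Hypotheses (f_inj : injective f) (g_inj : injective g).

Inductive rooted_in_I : I -> Prop :=
| rooted_start i : (forall j, g j <> i) -> rooted_in_I i
| rooted_step (x : {i | S' i}) (Tfx : T' (f x)) :
    rooted_in_I (proj1_sig x) -> rooted_in_I (g (exist _ (f x) Tfx)).

Definition sb_match (i : I) (j : J) : Prop :=
  (rooted_in_I i /\ exists Si : S' i, f (exist _ i Si) = j) \/
  (~ rooted_in_I i /\ exists Tj : T' j, g (exist _ j Tj) = i).

Lemma sb_match_functional i j1 j2 : sb_match i j1 -> sb_match i j2 -> j1 = j2.
Proof.
move=> [[ri [p1 <-]]|[nri [q1 e1]]] [[ri' [p2 <-]]|[nri' [q2 e2]]] //.
- by rewrite (Prop_irrelevance p1 p2).
- by have /(congr1 (@proj1_sig _ _)) := g_inj _ _ (etrans e1 (esym e2)).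
Qed.

Lemma rooted_in_I_fg {i1 i2 j} : rooted_in_I i1 ->
  (exists Si : S' i1, f (exist _ i1 Si) = j) ->
  (exists Tj : T' j, g (exist _ j Tj) = i2) -> rooted_in_I i2.
Proof. by move=> ri1 [p <-] [q <-]; exact: (rooted_step (exist _ i1 p) q ri1). Qed.

Lemma sb_match_injective i1 i2 j : sb_match i1 j -> sb_match i2 j -> i1 = i2.
Proof.
move=> [[ri1 fi1]|[ri1 gi1]] [[ri2 fi2]|[ri2 gi2]].
- case: fi1 fi2 => [p1 e1] [p2 e2].
  by have /(congr1 (@proj1_sig _ _)) := f_inj _ _ (etrans e1 (esym e2)).
- by case: (ri2 (rooted_in_I_fg ri1 fi1 gi2)).
- by case: (ri1 (rooted_in_I_fg ri2 fi2 gi1)).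
- by case: gi1 gi2 => [q1 <-] [q2 <-]; rewrite (Prop_irrelevance q1 q2).
Qed.

Lemma sb_match_domain i : S' i -> exists j, sb_match i j.
Proof.
move=> Si; have [ri|ri] := pselect (rooted_in_I i).
  by exists (f (exist _ i Si)); left; split => //; exists Si.
have [[j Tj] gj] : exists y, g y = i.
  apply: contrapT => nogi; apply: ri; apply: rooted_start => y gy.
  by apply: nogi; exists y.
by exists j; right; split => //; exists Tj.
Qed.

Lemma sb_match_codomain j : T' j -> exists i, sb_match i j.
Proof.
move=> Tj; have [ri|ri] := pselect (rooted_in_I (g (exist _ j Tj))); last first.
  by exists (g (exist _ j Tj)); right; split => //; exists Tj.
inversion ri as [i nog gj|[i Si] Tfi ri' gfi]; first by case: (nog (exist _ j Tj)).
have /(congr1 (@proj1_sig _ _)) /= fij := g_inj _ _ gfi.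
by exists i; left; split => //; exists Si.
Qed.

End PartialSchroederBernstein.

Arguments sb_match {I J S' T'} f g i j.

Section Embeddings.

Variables (R : realType) (X : Type) (d : X -> X -> \bar R) (Delta : set X).
Variables (I J : Type) (s : I -> X) (t : J -> X).

Lemma eps_embedding_le (e1 e2 : \bar R) : e1 <= e2 ->
  eps_embedding d Delta s t e1 -> eps_embedding d Delta s t e2.
Proof.
move=> le12 [S' [nearS [f [f_inj df]]]]; exists S'; split.
  by move=> i /nearS [y [Dy dy]]; exists y; split => //; exact: le_trans le12.
by exists f; split => // i; exact: le_trans (df i) le12.
Qed.

Lemma eps_embedding_of_matching (e : \bar R) :
  eps_matching d Delta s t e -> eps_embedding d Delta s t e.
Proof.
move=> [S' [T' [nearS [_ [f [f_bij df]]]]]]; exists S'; split => //.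
exists (fun i => proj1_sig (f i)); split => // i1 i2 /sval_inj.
exact: bij_inj.
Qed.

Hypothesis d_sym : forall x y, d x y = d y x.

Lemma eps_embedding_of_matching_sym (e : \bar R) :
  eps_matching d Delta s t e -> eps_embedding d Delta t s e.
Proof.
move=> [S' [T' [_ [nearT [f [[g fK gK] df]]]]]]; exists T'; split => //.
exists (fun j => proj1_sig (g j)); split.
  by move=> j1 j2 /sval_inj /(can_inj gK).
by move=> j; rewrite d_sym; have := df (g j); rewrite gK.
Qed.

Lemma eps_matching_of_embeddings (e : \bar R) :
  eps_embedding d Delta s t e -> eps_embedding d Delta t s e ->
  eps_matching d Delta s t e.
Proof.
move=> [S' [nearS [f [f_inj df]]]] [T' [nearT [g [g_inj dg]]]].
have [h [h_bij h_match]] := bijective_of_graph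
  (sb_match_functional g_inj) (sb_match_injective f_inj).
exists (fun i => exists j, sb_match f g i j), (fun j => exists i, sb_match f g i j).
split; [|split].
- by move=> i unmatched; apply: nearS => Si; apply: unmatched; exact: sb_match_domain.
- by move=> j unmatched; apply: nearT => Tj; apply: unmatched; exact: sb_match_codomain.
exists h; split => // x; have [[_ [Si <-]]|[_ [Tj gx]]] := h_match x.
  exact: (df (exist S' _ Si)).
by rewrite d_sym -gx; exact: (dg (exist T' _ Tj)).
Qed.

End Embeddings.

Theorem proposition7p2 (R : realType) (X : Type) (d : X -> X -> \bar R)
  (hd : ext_pseudometric d) (Delta : set X)
  (I J : Type) (s : I -> X) (t : J -> X) :
  bottleneck d Delta s t =
  Order.max (hemidist d Delta s t) (hemidist d Delta t s).
Proof.
have d_sym : forall x y, d x y = d y x by case: hd => _ [_ [? _]].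
apply/le_anti/andP; split; last first.
  rewrite ge_max; apply/andP; split; apply: ereal_inf_le_tmp => e [e0 he]; split => //.
    exact: eps_embedding_of_matching.
  exact: eps_embedding_of_matching_sym.
rewrite leNgt gt_max; apply/negP => /andP [lt1 lt2].
have [e1 [e1_ge0 emb1] lt_e1] := ereal_inf_lt lt1.
have [e2 [e2_ge0 emb2] lt_e2] := ereal_inf_lt lt2.
have : bottleneck d Delta s t <= Order.max e1 e2.
  apply: ereal_inf_lbound; split; first by rewrite le_max e1_ge0.
  apply: eps_matching_of_embeddings => //.
    by apply: eps_embedding_le emb1; rewrite le_max lexx.
  by apply: eps_embedding_le emb2; rewrite le_max lexx orbT.
by rewrite leNgt gt_max lt_e1 lt_e2.
Qed.
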